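(* Let $f$ be a real-valued symmetric ternary tensor in $(\mathbb{C}^3)^{\otimes 3}$, and suppose there exist $\alpha,\beta,\gamma\in\mathbb{C}^3$ with $f=\alpha^{\otimes 3}+\beta^{\otimes 3}+\gamma^{\otimes 3}$ and $\langle\alpha,\beta\rangle=\langle\beta,\gamma\rangle=\langle\gamma,\alpha\rangle=0$. Then there exist real vectors $\alpha',\beta',\gamma'\in\mathbb{R}^3$ with $f=\alpha'^{\otimes 3}+\beta'^{\otimes 3}+\gamma'^{\otimes 3}$ and $\langle\alpha',\beta'\rangle=\langle\beta',\gamma'\rangle=\langle\gamma',\alpha'\rangle=0$. Consequently, there is a $3\times3$ real orthogonal matrix $T$ and $a,b,c\in\mathbb{R}$ such that $T^{\otimes 3} f = a\,e_1^{\otimes 3}+b\,e_2^{\otimes 3}+c\,e_3^{\otimes 3}$.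
   Context: A ternary signature on domain $\{1,2,3\}$ (colors R, G, B) is a function $\{1,2,3\}^3\to\mathbb{C}$, identified with a tensor in $(\mathbb{C}^3)^{\otimes 3}$; it is symmetric if invariant under permutation of its arguments. For $u,v\in\mathbb{C}^n$, $\langle u,v\rangle=\sum_j u_jv_j$ (bilinear, no conjugation). $e_1,e_2,e_3$ are the standard basis vectors. For a matrix $T$, $Tf$ denotes $T^{\otimes 3}f$. *)

From HB Require Import structures.
From mathcomp Require Import all_boot all_order all_algebra.
From mathcomp Require Import reals.
From mathcomp Require Export complex.
Set Implicit Arguments. Unset Strict Implicit. Unset Printing Implicit Defensive.
Import Order.TTheory GRing.Theory Num.Theory.
Local Open Scope ring_scope.

(* A ternary signature on domain {1,2,3}, i.e. a tensor in (K^3)^{(x)3},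
   indices 'I_3 = {0,1,2} standing for {1,2,3}. *)
Definition tensor3 (K : Type) := 'I_3 -> 'I_3 -> 'I_3 -> K.

Definition symmetric3 (K : Type) (f : tensor3 K) : Prop :=
  forall i j k, f i j k = f j i k /\ f i j k = f i k j.

Definition cube3 (K : pzRingType) (v : 'I_3 -> K) : tensor3 K :=
  fun i j k => v i * v j * v k.

(* bilinear form <u,v> = sum_j u_j v_j (no conjugation) *)
Definition bdot (K : pzRingType) (u v : 'I_3 -> K) : K :=
  \sum_(j < 3) u j * v j.

Definition tens_act (K : pzRingType) (T : 'M[K]_3) (f : tensor3 K) : tensor3 K :=
  fun i j k => \sum_(p < 3) \sum_(q < 3) \sum_(r < 3) T i p * T j q * T k r * f p q r.

Definition ebasis (K : pzRingType) (l : 'I_3) : 'I_3 -> K :=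
  fun i => (i == l)%:R.

Definition cvec (R : rcfType) (v : 'I_3 -> R) : 'I_3 -> R[i] :=
  fun i => (v i)%:C%C.
Definition ctens (R : rcfType) (f : tensor3 R) : tensor3 R[i] :=
  fun i j k => (f i j k)%:C%C.

Definition real_valued (R : rcfType) (f : tensor3 R[i]) : Prop :=
  forall i j k, complex.Im (f i j k) = 0.

From HB Require Import structures.
From mathcomp Require Import all_boot all_order all_algebra.
From mathcomp Require Import reals.
From mathcomp Require Import complex.
From mathcomp Require Import ring lra.
Set Implicit Arguments. Unset Strict Implicit. Unset Printing Implicit Defensive.
Import Order.TTheory GRing.Theory Num.Theory.
Local Open Scope ring_scope.

(* Contracting f in one slot with α shows that α is an
   eigenvector of every slice matrix f(l,.,.), with eigenvalue <α,α> α_l; the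
   slices are real symmetric, so <α,α> α is a real vector.  Such a vector v
   splits as v^3 = a^3 + u^3 with a real, u isotropic (<u,u> = 0), and both a
   multiple of v: for N = <v,v> ≠ 0 take a = N v / c with c a real cube root of
   <N v, N v> = N^3.  Summing, f = (real part) + (isotropic part); the
   isotropic part is real valued and each of its slices g satisfies <g,g> = 0,
   so it vanishes.  The real parts inherit the orthogonality of α, β, γ.

   Part 2.  Pairwise orthogonal real vectors are multiples of the vectors of an
   orthonormal frame (normalise the nonzero ones, complete with cross
   products).  The matrix T with that frame as rows is orthogonal and T^{(x)3}
   maps each t_i^3 to e_i^3, which diagonalises f. *)

Notation o0 := (@Ordinal 3 0 isT).
Notation o1 := (@Ordinal 3 1 isT).
Notation o2 := (@Ordinal 3 2 isT).

Lemma sum3 (V : nmodType) (F : 'I_3 -> V) :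
  \sum_(j < 3) F j = F o0 + F o1 + F o2.
Proof.
rewrite !big_ord_recr big_ord0 /= add0r.
by congr (F _ + F _ + F _); apply: val_inj.
Qed.

Lemma ord3P (P : 'I_3 -> Prop) : P o0 -> P o1 -> P o2 -> forall i, P i.
Proof.
move=> h0 h1 h2 [[|[|[|n]]] Hn] //.
- by rewrite (_ : Ordinal Hn = o0) //; apply: val_inj.
- by rewrite (_ : Ordinal Hn = o1) //; apply: val_inj.
- by rewrite (_ : Ordinal Hn = o2) //; apply: val_inj.
Qed.

Section BilinearForm.
Variable K : comNzRingType.
Implicit Types (u v w x t : 'I_3 -> K) (s k : K).

Lemma bdotC u v : bdot u v = bdot v u.
Proof. rewrite /bdot !sum3; ring. Qed.

Lemma bdot_scale k (k' : K) u w :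
  bdot (fun l => k * u l) (fun l => k' * w l) = k * k' * bdot u w.
Proof. rewrite /bdot !sum3; ring. Qed.

Lemma bdot_multiple x t y s : (forall l, x l = s * t l) -> bdot x y = s * bdot t y.
Proof. by move=> h; rewrite /bdot mulr_sumr; apply: eq_bigr => l _; rewrite h mulrA. Qed.

Lemma cubes_contract (a b c v : 'I_3 -> K) l j :
  \sum_(k < 3) (cube3 a l j k + cube3 b l j k + cube3 c l j k) * v k =
  a l * a j * bdot a v + b l * b j * bdot b v + c l * c j * bdot c v.
Proof. rewrite /bdot /cube3 !sum3; ring. Qed.

End BilinearForm.

Lemma bdot_ge0 (R : realDomainType) (x : 'I_3 -> R) : 0 <= bdot x x.
Proof. by rewrite /bdot sum3 -!expr2 !addr_ge0 ?sqr_ge0. Qed.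

Lemma bdot_eq0 (R : realDomainType) (x : 'I_3 -> R) : bdot x x = 0 -> forall l, x l = 0.
Proof.
rewrite /bdot sum3 -!expr2 => H.
have /andP[h01 h2] : (x o0 ^+ 2 + x o1 ^+ 2 == 0) && (x o2 ^+ 2 == 0).
  by rewrite -paddr_eq0 ?addr_ge0 ?sqr_ge0 // H.
move: h01; rewrite paddr_eq0 ?sqr_ge0 // => /andP[h0 h1].
by apply: ord3P; apply/eqP; rewrite -sqrf_eq0.
Qed.

(* Real cube roots exist in a real closed field (intermediate value theorem). *)
Lemma cube_root (R : rcfType) (r : R) : exists c : R, c ^+ 3 = r.
Proof.
pose b := `|r| + 1.
have hb : 1 <= b by rewrite /b lerDr normr_ge0.
have h1 : r <= `|r| := ler_norm r.
have h2 : - `|r| <= r by have := ler_norm (- r); rewrite normrN; lra.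
have hb3 : b <= b ^+ 3.
  have : 1 <= b ^+ 2 by rewrite expr_ge1 // (le_trans ler01 hb).
  by move=> h; rewrite exprS ler_peMr // (le_trans ler01 hb).
have [||c _ /rootP] := @poly_ivt R ('X^3 - r%:P) (- b) b.
- by have := le_trans ler01 hb; lra.
- rewrite !hornerE; apply/andP; split.
    have -> : (- b) ^+ 3 = - b ^+ 3 by rewrite exprNn; ring.
    rewrite /b in hb3 *; lra.
  rewrite /b in hb3 *; lra.
by rewrite !hornerE => /eqP; rewrite subr_eq0 => /eqP h; exists c.
Qed.

Section ComplexFacts.
Variable R : rcfType.
Implicit Types (x : R[i]).

Lemma real_complexE x : complex.Im x = 0 -> x = (complex.Re x)%:C%C.
Proof. by case: x => a b /= ->. Qed.

Lemma conjc_real_eq x : complex.Im x = 0 -> (x^*)%C = x.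
Proof. by case: x => a b /= ->; rewrite oppr0. Qed.

Lemma mul_conjc x : (x^*)%C * x = (complex.Re x ^+ 2 + complex.Im x ^+ 2)%:C%C.
Proof.
case: x => a b; rewrite /= /GRing.mul /= /mulc /=.
apply/eqP; rewrite eq_complex /=; apply/andP; split; apply/eqP; ring.
Qed.

Lemma Im_subC x (y : R) : complex.Im (x - y%:C%C) = complex.Im x.
Proof. by case: x => a b /=; rewrite oppr0 addr0. Qed.

Lemma cvec_bdot (a b : 'I_3 -> R) : bdot (cvec a) (cvec b) = (bdot a b)%:C%C.
Proof. by rewrite /bdot /cvec !sum3 !rmorphD !rmorphM. Qed.

Lemma real_isotropic_eq0 (g : 'I_3 -> R[i]) :
  (forall k, complex.Im (g k) = 0) -> bdot g g = 0 -> forall k, g k = 0.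
Proof.
move=> gr gg; pose r k := complex.Re (g k).
have gE : forall k, g k = cvec r k by move=> k; rewrite /cvec /r -real_complexE.
have rr : bdot r r = 0.
  by apply: (@complexI R); rewrite -cvec_bdot rmorph0 -gg /bdot; apply: eq_bigr => k _; rewrite -!gE.
by move=> k; rewrite gE /cvec (bdot_eq0 rr).
Qed.

(* Eigenvalues of a real symmetric matrix are real: with s = v^* A v and
   n = v^* v > 0 one has s = lam n, while s is self-conjugate. *)
Lemma real_symmetric_eigenvalue (A : 'I_3 -> 'I_3 -> R[i]) (v : 'I_3 -> R[i]) (lam : R[i]) :
  (forall j k, complex.Im (A j k) = 0) -> (forall j k, A j k = A k j) ->
  (forall j, \sum_(k < 3) A j k * v k = lam * v j) -> (exists j, v j != 0) ->
  complex.Im lam = 0.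
Proof.
move=> Ar As Hv [j0 Hj0].
pose s := \sum_(j < 3) (v j)^*%C * \sum_(k < 3) A j k * v k.
pose n := \sum_(j < 3) (v j)^*%C * v j.
have sE : s = lam * n.
  by rewrite /s /n mulr_sumr; apply: eq_bigr => j _; rewrite Hv; ring.
have s_real : (s^*)%C = s.
  have cA j k : ((A j k)^*)%C = A j k by rewrite conjc_real_eq.
  rewrite /s !sum3 !(rmorphD, rmorphM) /= !conjcK !cA.
  rewrite [A o1 o0]As [A o2 o0]As [A o2 o1]As; ring.
have nE : n = (\sum_(j < 3) (complex.Re (v j) ^+ 2 + complex.Im (v j) ^+ 2))%:C%C.
  by rewrite rmorph_sum; apply: eq_bigr => j _; rewrite mul_conjc.
have n_real : (n^*)%C = n by rewrite nE conjc_real.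
have n0 : n != 0.
  rewrite nE; apply/negP => /eqP H.
  have : (\sum_(j < 3) (complex.Re (v j) ^+ 2 + complex.Im (v j) ^+ 2)) = 0.
    by apply: complexI; rewrite H.
  move/eqP; rewrite psumr_eq0; last by move=> j _; rewrite addr_ge0 ?sqr_ge0.
  move=> /allP /(_ j0 (mem_index_enum _)) /=.
  rewrite paddr_eq0 ?sqr_ge0 // !sqrf_eq0 => /andP [/eqP h1 /eqP h2].
  by move: Hj0; case: (v j0) h1 h2 => a b /= -> ->; rewrite eqxx.
move: s_real; rewrite sE rmorphM /= n_real => /(mulIf n0); clear Hv sE.
case: lam => a b /= [] /eqP h; have : b *+ 2 = 0 by rewrite mulr2n -{1}(eqP h) addNr.
by move/eqP; rewrite mulrn_eq0 /= => /eqP.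
Qed.

End ComplexFacts.

Section Realification.
Variable R : rcfType.
Implicit Types (f : tensor3 R[i]) (a b c v : 'I_3 -> R[i]).

(* α is an eigenvector of the slice f(l,.,.) with eigenvalue <α,α> α_l;
   hence <α,α> α is a real vector. *)
Lemma slice_eigen_real f a b c :
  symmetric3 f -> real_valued f ->
  (forall i j k, f i j k = cube3 a i j k + cube3 b i j k + cube3 c i j k) ->
  bdot b a = 0 -> bdot c a = 0 ->
  forall l, complex.Im (bdot a a * a l) = 0.
Proof.
move=> Hs Hr Hf hba hca l.
have [nz|z] := boolP [exists j, a j != 0]; last first.
  have -> : a l = 0 by move: z; rewrite negb_exists => /forallP /(_ l); rewrite negbK => /eqP.
  by rewrite mulr0.
rewrite mulrC; apply: (@real_symmetric_eigenvalue R (f l) a).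
- by move=> j k; apply: Hr.
- by move=> j k; case: (Hs l j k).
- move=> j; under eq_bigr => k _ do rewrite Hf.
  by rewrite cubes_contract hba hca; ring.
- by move/existsP: nz.
Qed.

(* If <v,v> v is real then v^3 = a^3 + (m v)^3 with a a real multiple of v
   and m v isotropic (m = 0 unless v itself is isotropic). *)
Lemma split_cube v :
  (forall l, complex.Im (bdot v v * v l) = 0) ->
  exists (a : 'I_3 -> R) (k m : R[i]),
    (forall l, cvec a l = k * v l) /\ m * bdot v v = 0 /\
    (forall i j k', cube3 v i j k' = (cube3 a i j k')%:C%C + cube3 (fun l => m * v l) i j k').
Proof.
move=> Hv; set N := bdot v v.
have [N0|N0] := eqVneq N 0.
  exists (fun _ => 0), 0, 1; split; first by move=> l; rewrite /cvec mul0r.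
  split; first by rewrite N0 mulr0.
  by move=> i j k; rewrite /cube3 !mul1r !mul0r add0r.
pose w l := complex.Re (N * v l).
have wE l : (w l)%:C%C = N * v l by rewrite /w -real_complexE.
have ww : (bdot w w)%:C%C = N ^+ 3.
  rewrite -cvec_bdot /bdot /cvec !sum3 !wE /N /bdot !sum3; ring.
have [c c3] := cube_root (bdot w w).
have c0 : c != 0.
  apply/eqP => c0; move: ww; rewrite -c3 c0 expr0n /= rmorph0 => /esym/eqP.
  by rewrite expf_eq0 /= (negbTE N0).
have k3 : (N / c%:C%C) ^+ 3 = 1.
  by rewrite exprMn exprVn -rmorphXn /= c3 ww divff // expf_eq0 /= (negbTE N0).
exists (fun l => w l / c), (N / c%:C%C), 0; split.
  by move=> l; rewrite /cvec rmorphM fmorphV /= wE; ring.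
split; first by rewrite mul0r.
move=> i j k; rewrite /cube3 !mul0r addr0 !rmorphM !fmorphV /= !wE.
by rewrite -[LHS]mul1r -k3; ring.
Qed.

(* A real-valued sum of cubes of three pairwise orthogonal isotropic vectors
   vanishes: each slice g = (u^3 + v^3 + w^3)(l,j,.) is a combination of
   u, v, w, hence <g,g> = 0. *)
Lemma isotropic_cubes_vanish (u1 u2 u3 : 'I_3 -> R[i]) :
  bdot u1 u1 = 0 -> bdot u2 u2 = 0 -> bdot u3 u3 = 0 ->
  bdot u1 u2 = 0 -> bdot u2 u3 = 0 -> bdot u3 u1 = 0 ->
  (forall i j k, complex.Im (cube3 u1 i j k + cube3 u2 i j k + cube3 u3 i j k) = 0) ->
  forall i j k, cube3 u1 i j k + cube3 u2 i j k + cube3 u3 i j k = 0.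
Proof.
move=> h11 h22 h33 h12 h23 h31 Hr l j.
pose g k := cube3 u1 l j k + cube3 u2 l j k + cube3 u3 l j k.
have g_perp v : bdot u1 v = 0 -> bdot u2 v = 0 -> bdot u3 v = 0 ->
    \sum_(k < 3) g k * v k = 0.
  by move=> a b c; rewrite /g cubes_contract a b c; ring.
have gg : bdot g g = 0.
  have -> : bdot g g =
      u1 l * u1 j * (\sum_(k < 3) g k * u1 k) + u2 l * u2 j * (\sum_(k < 3) g k * u2 k)
      + u3 l * u3 j * (\sum_(k < 3) g k * u3 k).
    by rewrite /bdot !sum3 /g /cube3; ring.
  have h21 : bdot u2 u1 = 0 by rewrite bdotC.
  have h32 : bdot u3 u2 = 0 by rewrite bdotC.
  have h13 : bdot u1 u3 = 0 by rewrite bdotC.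
  by rewrite !g_perp //; ring.
exact: (real_isotropic_eq0 (fun k => Hr l j k) gg).
Qed.

Lemma cvec_multiples_orthogonal (a b : 'I_3 -> R) k k' (u w : 'I_3 -> R[i]) :
  (forall l, cvec a l = k * u l) -> (forall l, cvec b l = k' * w l) ->
  bdot u w = 0 -> bdot a b = 0.
Proof.
move=> ha hb huw; apply: (@complexI R); rewrite rmorph0 -cvec_bdot.
rewrite (_ : bdot (cvec a) (cvec b) = bdot (fun l => k * u l) (fun l => k' * w l)).
  by rewrite bdot_scale huw mulr0.
by rewrite /bdot; apply: eq_bigr => l _; rewrite ha hb.
Qed.

(* First claim of the theorem: split each of α^3, β^3, γ^3 into a real cube
   and an isotropic cube; the isotropic parts sum to zero. *)
Lemma real_orthogonal_decomposition f :
  symmetric3 f -> real_valued f ->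
  (exists alpha beta gamma : 'I_3 -> R[i],
      (forall i j k, f i j k = cube3 alpha i j k + cube3 beta i j k + cube3 gamma i j k) /\
      bdot alpha beta = 0 /\ bdot beta gamma = 0 /\ bdot gamma alpha = 0) ->
  (exists alpha' beta' gamma' : 'I_3 -> R,
      (forall i j k, f i j k =
         ctens (fun i j k => cube3 alpha' i j k + cube3 beta' i j k + cube3 gamma' i j k) i j k) /\
      bdot alpha' beta' = 0 /\ bdot beta' gamma' = 0 /\ bdot gamma' alpha' = 0).
Proof.
move=> Hs Hr [al [be [ga [Hf [hab [hbg hga]]]]]].
have Hf2 i j k : f i j k = cube3 be i j k + cube3 ga i j k + cube3 al i j k.
  by rewrite Hf; ring.
have Hf3 i j k : f i j k = cube3 ga i j k + cube3 al i j k + cube3 be i j k.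
  by rewrite Hf; ring.
have [a1 [k1 [m1 [c1 [n1 e1]]]]] :=
  split_cube (slice_eigen_real Hs Hr Hf (etrans (bdotC _ _) hab) hga).
have [a2 [k2 [m2 [c2 [n2 e2]]]]] :=
  split_cube (slice_eigen_real Hs Hr Hf2 (etrans (bdotC _ _) hbg) hab).
have [a3 [k3 [m3 [c3 [n3 e3]]]]] :=
  split_cube (slice_eigen_real Hs Hr Hf3 (etrans (bdotC _ _) hga) hbg).
exists a1, a2, a3; split; last first.
  split; first exact: cvec_multiples_orthogonal c1 c2 hab.
  split; first exact: cvec_multiples_orthogonal c2 c3 hbg.
  exact: cvec_multiples_orthogonal c3 c1 hga.
pose u1 l := m1 * al l; pose u2 l := m2 * be l; pose u3 l := m3 * ga l.
have uE i j k : cube3 u1 i j k + cube3 u2 i j k + cube3 u3 i j k =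
    f i j k - (cube3 a1 i j k + cube3 a2 i j k + cube3 a3 i j k)%:C%C.
  by rewrite Hf e1 e2 e3 !rmorphD; ring.
move=> i j k; apply/eqP; rewrite /ctens -subr_eq0 -uE; apply/eqP.
apply: isotropic_cubes_vanish.
- by rewrite /u1 bdot_scale -mulrA n1 mulr0.
- by rewrite /u2 bdot_scale -mulrA n2 mulr0.
- by rewrite /u3 bdot_scale -mulrA n3 mulr0.
- by rewrite /u1 /u2 bdot_scale hab mulr0.
- by rewrite /u2 /u3 bdot_scale hbg mulr0.
- by rewrite /u3 /u1 bdot_scale hga mulr0.
- by move=> i' j' k'; rewrite uE Im_subC; apply: Hr.
Qed.

End Realification.

Section Frames.
Variable K : comNzRingType.
Implicit Types (t u x a b c : 'I_3 -> K).

Definition cross (u v : 'I_3 -> K) : 'I_3 -> K := fun l =>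
  if val l == 0%N then u o1 * v o2 - u o2 * v o1
  else if val l == 1%N then u o2 * v o0 - u o0 * v o2
  else u o0 * v o1 - u o1 * v o0.

Definition orthonormal t1 t2 t3 :=
  bdot t1 t1 = 1 /\ bdot t2 t2 = 1 /\ bdot t3 t3 = 1 /\
  bdot t1 t2 = 0 /\ bdot t2 t3 = 0 /\ bdot t3 t1 = 0.

Lemma orthonormal_rot t1 t2 t3 : orthonormal t1 t2 t3 -> orthonormal t2 t3 t1.
Proof. by rewrite /orthonormal; intuition. Qed.

Lemma cross_orthonormal t1 t2 :
  bdot t1 t1 = 1 -> bdot t2 t2 = 1 -> bdot t1 t2 = 0 -> orthonormal t1 t2 (cross t1 t2).
Proof.
move=> h1 h2 h12; do !split => //.
- have -> : bdot (cross t1 t2) (cross t1 t2) = bdot t1 t1 * bdot t2 t2 - bdot t1 t2 ^+ 2.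
    by rewrite /bdot /cross !sum3 /=; ring.
  by rewrite h1 h2 h12; ring.
- by rewrite /bdot /cross !sum3 /=; ring.
- by rewrite /bdot /cross !sum3 /=; ring.
Qed.

Definition rows3 t1 t2 t3 : 'M[K]_3 :=
  \matrix_(i, j) (if val i == 0%N then t1 j else if val i == 1%N then t2 j else t3 j).

Lemma rows3_orthogonal t1 t2 t3 :
  orthonormal t1 t2 t3 -> rows3 t1 t2 t3 *m (rows3 t1 t2 t3)^T = 1%:M.
Proof.
case=> [h1 [h2 [h3 [h12 [h23 h31]]]]].
have h21 : bdot t2 t1 = 0 by rewrite bdotC.
have h32 : bdot t3 t2 = 0 by rewrite bdotC.
have h13 : bdot t1 t3 = 0 by rewrite bdotC.
move: h1 h2 h3 h12 h23 h31 h21 h32 h13; rewrite /bdot !sum3 => h1 h2 h3 h12 h23 h31 h21 h32 h13.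
apply/matrixP; apply: ord3P; apply: ord3P;
  rewrite !mxE sum3 !mxE /= ?mulr1n ?mulr0n;
  first [ by rewrite -h1; ring | by rewrite -h2; ring | by rewrite -h3; ring
        | by rewrite -h12; ring | by rewrite -h23; ring | by rewrite -h31; ring
        | by rewrite -h21; ring | by rewrite -h32; ring | by rewrite -h13; ring ].
Qed.

(* Expansion of a vector in an orthonormal frame (T^T T = 1). *)
Lemma orthonormal_expand t1 t2 t3 c : orthonormal t1 t2 t3 ->
  forall l, c l = bdot c t1 * t1 l + bdot c t2 * t2 l + bdot c t3 * t3 l.
Proof.
move=> /rows3_orthogonal /mulmx1C /matrixP E.
have E' m l : t1 m * t1 l + t2 m * t2 l + t3 m * t3 l = (m == l)%:R.
  by move: (E m l); rewrite !mxE sum3 !mxE /=.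
move=> l.
have -> : bdot c t1 * t1 l + bdot c t2 * t2 l + bdot c t3 * t3 l =
  c o0 * (o0 == l)%:R + c o1 * (o1 == l)%:R + c o2 * (o2 == l)%:R.
  by rewrite -!E' /bdot !sum3; ring.
by move: l; apply: ord3P => /=; ring.
Qed.

Definition multiple x t := exists s : K, forall l, x l = s * t l.

Definition framed a b c t1 t2 t3 :=
  orthonormal t1 t2 t3 /\ multiple a t1 /\ multiple b t2 /\ multiple c t3.

Lemma framed_rot a b c t1 t2 t3 : framed a b c t1 t2 t3 -> framed b c a t2 t3 t1.
Proof. by case=> /orthonormal_rot O [ma [mb mc]]. Qed.

Lemma multiple_cross t1 t2 c :
  bdot t1 t1 = 1 -> bdot t2 t2 = 1 -> bdot t1 t2 = 0 ->
  bdot c t1 = 0 -> bdot c t2 = 0 -> multiple c (cross t1 t2).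
Proof.
move=> h1 h2 h12 ct1 ct2; exists (bdot c (cross t1 t2)) => l.
rewrite (orthonormal_expand c (cross_orthonormal h1 h2 h12) l) ct1 ct2.
by rewrite !mul0r !add0r.
Qed.

End Frames.

Section RealFrames.
Variable R : rcfType.
Implicit Types (t u x y a b c : 'I_3 -> R).

Lemma isotropic_multiple x t : bdot x x = 0 -> multiple x t.
Proof. by move=> xx; exists 0 => l; rewrite mul0r (bdot_eq0 xx). Qed.

Lemma normalize x : bdot x x != 0 ->
  exists t s, bdot t t = 1 /\ s != 0 /\ forall l, x l = s * t l.
Proof.
move=> nz; have pos : 0 < bdot x x by rewrite lt0r nz bdot_ge0.
pose s := Num.sqrt (bdot x x).
have s0 : s != 0 by rewrite /s sqrtr_eq0 -ltNge.
exists (fun l => x l / s), s; split; last split => //.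
  rewrite (@bdot_multiple _ (fun l => x l / s) x _ s^-1); last by move=> l; rewrite mulrC.
  rewrite bdotC (@bdot_multiple _ (fun l => x l / s) x _ s^-1); last by move=> l; rewrite mulrC.
  by rewrite mulrA -expr2 exprVn sqr_sqrtr ?ltW // mulVf.
by move=> l; rewrite mulrC divfK.
Qed.

Lemma orthogonal_unscale x t y s : (forall l, x l = s * t l) -> s != 0 ->
  bdot x y = 0 -> bdot t y = 0.
Proof.
by move=> xE s0; rewrite (bdot_multiple _ xE) => /eqP; rewrite mulf_eq0 (negbTE s0) => /eqP.
Qed.

(* Every unit vector has a unit orthogonal partner: some t x e_m is nonzero,
   since the squared norms of the three t x e_m add up to 2. *)
Lemma unit_perp t : bdot t t = 1 -> exists u, bdot u u = 1 /\ bdot t u = 0.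
Proof.
move=> tt; pose x m := cross t (ebasis R m).
have [m nz] : exists m, bdot (x m) (x m) != 0.
  apply/existsP; apply: contraT; rewrite negb_exists => /forallP z.
  have z' m : bdot (x m) (x m) = 0 by apply/eqP/negPn/z.
  have : bdot (x o0) (x o0) + bdot (x o1) (x o1) + bdot (x o2) (x o2) = 2 * bdot t t.
    by rewrite /x /bdot /cross /ebasis !sum3 /=; ring.
  by rewrite !z' tt !addr0 mulr1 => /eqP; rewrite eq_sym pnatr_eq0.
have [u [s [uu [s0 xE]]]] := normalize nz.
exists u; split => //; rewrite bdotC; apply: (orthogonal_unscale xE s0).
by rewrite /x /bdot /cross !sum3 /=; ring.
Qed.

Lemma frame_from_unit t1 c : bdot t1 t1 = 1 -> bdot c t1 = 0 ->
  exists t2 t3, orthonormal t1 t2 t3 /\ multiple c t3.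
Proof.
move=> h1 ct1; have [cz|nc] := eqVneq (bdot c c) 0.
  have [u [uu tu]] := unit_perp h1.
  by exists u, (cross t1 u); split; [exact: cross_orthonormal | exact: isotropic_multiple].
have [t3 [s3 [h3 [s30 cE]]]] := normalize nc.
have h31 : bdot t3 t1 = 0 := orthogonal_unscale cE s30 ct1.
exists (cross t3 t1), t3; split; last by exists s3.
exact/orthonormal_rot/cross_orthonormal.
Qed.

Lemma frame_nonisotropic a b c : bdot a a != 0 ->
  bdot a b = 0 -> bdot b c = 0 -> bdot c a = 0 ->
  exists t1 t2 t3, framed a b c t1 t2 t3.
Proof.
move=> na hab hbc hca.
have [t1 [s1 [h1 [s10 aE]]]] := normalize na.
have ct1 : bdot c t1 = 0.
  by rewrite bdotC; apply: (orthogonal_unscale aE s10); rewrite bdotC.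
have [bz|nb] := eqVneq (bdot b b) 0.
  have [t2 [t3 [O mc]]] := frame_from_unit h1 ct1.
  exists t1, t2, t3; split => //; split; first by exists s1.
  by split => //; exact: isotropic_multiple.
have [t2 [s2 [h2 [s20 bE]]]] := normalize nb.
have h12 : bdot t1 t2 = 0.
  rewrite bdotC; apply: (orthogonal_unscale bE s20).
  by rewrite bdotC; apply: (orthogonal_unscale aE s10).
have ct2 : bdot c t2 = 0.
  by rewrite bdotC; apply: (orthogonal_unscale bE s20).
exists t1, t2, (cross t1 t2); split; first exact: cross_orthonormal.
split; first by exists s1.
by split; [exists s2 | exact: multiple_cross].
Qed.

Lemma orthogonal_frame a b c :
  bdot a b = 0 -> bdot b c = 0 -> bdot c a = 0 ->
  exists t1 t2 t3, framed a b c t1 t2 t3.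
Proof.
move=> hab hbc hca.
have [az|na] := eqVneq (bdot a a) 0; last exact: frame_nonisotropic.
have [bz|nb] := eqVneq (bdot b b) 0.
  have [cz|nc] := eqVneq (bdot c c) 0.
    exists (ebasis R o0), (ebasis R o1), (ebasis R o2); split.
      by rewrite /orthonormal /bdot /ebasis !sum3 /=; do !split; ring.
    by do !split; exact: isotropic_multiple.
  have [t3 [t1 [t2 F]]] := frame_nonisotropic nc hca hab hbc.
  by exists t1, t2, t3; apply: framed_rot.
have [t2 [t3 [t1 F]]] := frame_nonisotropic nb hbc hca hab.
by exists t1, t2, t3; do 2 apply: framed_rot.
Qed.

End RealFrames.

Section TensorAction.
Variable K : comNzRingType.

Definition matvec (T : 'M[K]_3) (x : 'I_3 -> K) : 'I_3 -> K :=
  fun i => \sum_(p < 3) T i p * x p.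

Lemma tens_act_cubes (T : 'M[K]_3) (x y z : 'I_3 -> K) i j k :
  tens_act T (fun i j k => cube3 x i j k + cube3 y i j k + cube3 z i j k) i j k =
  cube3 (matvec T x) i j k + cube3 (matvec T y) i j k + cube3 (matvec T z) i j k.
Proof. rewrite /tens_act /cube3 /matvec !sum3; ring. Qed.

Lemma matvec_row (T : 'M[K]_3) (x : 'I_3 -> K) (s : K) m :
  T *m T^T = 1%:M -> (forall l, x l = s * T m l) ->
  forall i, matvec T x i = s * (i == m)%:R.
Proof.
move=> /matrixP TT xE i; have := TT i m; rewrite !mxE => <-.
by rewrite /matvec mulr_sumr; apply: eq_bigr => p _; rewrite xE !mxE; ring.
Qed.

Lemma tens_act_ext (T : 'M[K]_3) (f g : tensor3 K) :
  (forall p q r, f p q r = g p q r) -> forall i j k, tens_act T f i j k = tens_act T g i j k.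
Proof.
move=> h i j k; rewrite /tens_act; apply: eq_bigr => p _; apply: eq_bigr => q _.
by apply: eq_bigr => r _; rewrite h.
Qed.

End TensorAction.

Lemma tens_act_ctens (R : rcfType) (T : 'M[R]_3) (g : tensor3 R) i j k :
  tens_act (map_mx (fun x : R => x%:C%C) T) (ctens g) i j k = (tens_act T g i j k)%:C%C.
Proof. by rewrite /tens_act /ctens !sum3 !mxE !rmorphD !rmorphM. Qed.

Theorem mainTheorem2 (R : realType) (f : tensor3 R[i]) :
  symmetric3 f -> real_valued f ->
  (exists alpha beta gamma : 'I_3 -> R[i],
      (forall i j k, f i j k = cube3 alpha i j k + cube3 beta i j k + cube3 gamma i j k) /\
      bdot alpha beta = 0 /\ bdot beta gamma = 0 /\ bdot gamma alpha = 0) ->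
  (exists alpha' beta' gamma' : 'I_3 -> R,
      (forall i j k, f i j k =
         ctens (fun i j k => cube3 alpha' i j k + cube3 beta' i j k + cube3 gamma' i j k) i j k) /\
      bdot alpha' beta' = 0 /\ bdot beta' gamma' = 0 /\ bdot gamma' alpha' = 0)
  /\
  (exists (T : 'M[R]_3) (a b c : R),
      T *m T^T = 1%:M /\
      forall i j k,
        tens_act (map_mx (fun x : R => x%:C%C) T) f i j k =
        ctens (fun i j k => a * cube3 (ebasis R (@Ordinal 3 0 isT)) i j k + b * cube3 (ebasis R (@Ordinal 3 1 isT)) i j k
                            + c * cube3 (ebasis R (@Ordinal 3 2 isT)) i j k) i j k).
Proof.
move=> Hs Hr Hex.
have real_dec := real_orthogonal_decomposition Hs Hr Hex.
split; first exact: real_dec.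
have [a [b [c [Hf [hab [hbc hca]]]]]] := real_dec.
have [t1 [t2 [t3 [O [[s1 aE] [[s2 bE] [s3 cE]]]]]]] := orthogonal_frame hab hbc hca.
pose T := rows3 t1 t2 t3.
have TT : T *m T^T = 1%:M := rows3_orthogonal O.
have aT : forall i, matvec T a i = s1 * (i == o0)%:R.
  by apply: matvec_row TT _ => l; rewrite aE mxE.
have bT : forall i, matvec T b i = s2 * (i == o1)%:R.
  by apply: matvec_row TT _ => l; rewrite bE mxE.
have cT : forall i, matvec T c i = s3 * (i == o2)%:R.
  by apply: matvec_row TT _ => l; rewrite cE mxE.
exists T, (s1 ^+ 3), (s2 ^+ 3), (s3 ^+ 3); split => // i j k.
rewrite (tens_act_ext _ Hf) tens_act_ctens tens_act_cubes /ctens; congr (_%:C)%C.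
by rewrite /cube3 !aT !bT !cT /ebasis; ring.
Qed.
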